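(* Consider the independent block-fading binary symmetric wiretap channel with parameters $q_1,q_1^*\in[0,1]$, $q_2=1-q_1$, $q_2^*=1-q_1^*$, and crossover probabilities satisfying $p_1\le p_1^*\le p_2\le p_2^*\le 0.5$. Its secrecy capacity with channel state information available only at the decoders satisfies $$C^s_{\textrm{CSI-D}}\le q_1q_1^*H(p_1^* )+q_2^*H(p_2^* )-q_1H(p_1)-q_2q_2^*H(p_2).$$
   Context: $H(p)=-p\log_2 p-(1-p)\log_2(1-p)$ is the binary entropy function, and BSC$(p)$ denotes the binary symmetric channel with crossover probability $p$. Independent block-fading binary symmetric wiretap channel: the transmitter sends $NB$ binary symbols $X_{1:NB}$ organized in $B$ fading blocks of length $N$. Each block $k$ has a main-channel state $S_k\in\{1,2\}$ with $\Pr(S_k=1)=q_1$ and an eavesdropper-channel state $S^*_k\in\{1,2\}$ with $\Pr(S_k^*=1)=q_1^*$; all these states are mutually independent (across blocks and between the two channels) and constant within a block. Within block $k$, the legitimate receiver observes the output $Y$ of $N$ independent uses of BSC$(p_{S_k})$, and the eavesdropper observes the output $Z$ of $N$ independent uses of BSC$(p^*_{S^*_k})$. Let $\mathsf{S}$ denote all the state realizations $(S_k,S_k^* )_{k=1}^B$. A code consists of a (possibly randomized) encoder $X_{1:NB}=f(\mathsf{M})$ of a uniformly distributed message $\mathsf{M}$, which knows only the state distributions (not the realizations), and a decoder $\hat{\mathsf{M}}=g(Y_{1:NB},\mathsf{S})$; its rate is $\frac{1}{NB}\log_2$ of the message-set size. A rate $R$ is achievable if there are such codes of rate at least $R$ (asymptotically)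 with $N,B\to\infty$ such that $\Pr\{\mathsf{M}\ne\hat{\mathsf{M}}\}\to0$ and $\frac{1}{NB}I(\mathsf{M};Z_{1:NB}\mid\mathsf{S})\to 0$. $C^s_{\textrm{CSI-D}}$ is the supremum of achievable rates. *)

From HB Require Import structures.
From mathcomp Require Import all_boot all_order all_algebra.
From mathcomp Require Import all_classical all_reals all_analysis.
Set Implicit Arguments. Unset Strict Implicit. Unset Printing Implicit Defensive.
Import Order.TTheory GRing.Theory Num.Theory.
Local Open Scope ring_scope.
Local Open Scope classical_set_scope.

Section BFWiretap.
Variable R : realType.

(* base-2 logarithm; ln 0 = 0 in mathcomp-analysis, giving 0 log 0 = 0 *)
Definition log2 (x : R) : R := ln x / ln 2.

Definition H2 (p : R) : R := - p * log2 p - (1 - p) * log2 (1 - p).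

(* NB binary symbols organised in B blocks of length N: symbol (k,i) is the
   i-th symbol of block k *)
Definition word (N B : nat) := {ffun 'I_B * 'I_N -> bool}.
(* state realizations of the B blocks: true = state 1, false = state 2 *)
Definition state (B : nat) := {ffun 'I_B -> bool}.

Definition pstate (q : R) (B : nat) (s : state B) : R :=
  \prod_(k < B) (if s k then q else 1 - q).

Definition bfbsc (pa pb : R) (N B : nat) (s : state B) (x y : word N B) : R :=
  \prod_(ki : 'I_B * 'I_N)
     (let p := if s ki.1 then pa else pb in
      if y ki == x ki then 1 - p else p).

Definition is_encoder (N B M : nat) (f : 'I_M -> word N B -> R) : Prop :=
  forall m : 'I_M, (forall x, 0 <= f m x) /\ \sum_(x : word N B) f m x = 1.

(* Pr{ M <> g(Y, S) }, message uniform on 'I_M; the decoder sees the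
   legitimate output Y and all states S = (S_k, S*_k)_k *)
Definition err_prob (q1 q1s p1 p2 : R) (N B M : nat)
    (f : 'I_M -> word N B -> R) (g : word N B -> state B -> state B -> 'I_M) : R :=
  \sum_(s : state B) \sum_(ss : state B) \sum_(m < M) \sum_(x : word N B)
    \sum_(y : word N B)
      (M%:R)^-1 * pstate q1 s * pstate q1s ss * f m x * bfbsc p1 p2 s x y
        * (if g y s ss != m then 1 else 0).

Definition zcond (p1s p2s : R) (N B M : nat) (f : 'I_M -> word N B -> R)
    (m : 'I_M) (ss : state B) (z : word N B) : R :=
  \sum_(x : word N B) f m x * bfbsc p1s p2s ss x z.

Definition zmarg (p1s p2s : R) (N B M : nat) (f : 'I_M -> word N B -> R)
    (ss : state B) (z : word N B) : R :=
  (M%:R)^-1 * \sum_(m < M) zcond p1s p2s f m ss z.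

(* I(M ; Z | S) in bits *)
Definition leakage (q1 q1s p1s p2s : R) (N B M : nat)
    (f : 'I_M -> word N B -> R) : R :=
  \sum_(s : state B) \sum_(ss : state B) pstate q1 s * pstate q1s ss *
    \sum_(m < M) \sum_(z : word N B)
      (M%:R)^-1 * zcond p1s p2s f m ss z *
        log2 (zcond p1s p2s f m ss z / zmarg p1s p2s f ss z).

Definition achievable (q1 q1s p1 p2 p1s p2s : R) (Rt : R) : Prop :=
  forall eps : R, 0 < eps -> forall N0 B0 : nat,
  exists (N B M : nat) (f : 'I_M -> word N B -> R)
         (g : word N B -> state B -> state B -> 'I_M),
    [/\ (N0 <= N)%N, (B0 <= B)%N, (0 < M)%N & is_encoder f] /\
    [/\ log2 (M%:R) / ((N * B)%:R) >= Rt - eps,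
        err_prob q1 q1s p1 p2 f g <= eps &
        leakage q1 q1s p1s p2s f / ((N * B)%:R) <= eps].

Definition CsCSID (q1 q1s p1 p2 p1s p2s : R) : \bar R :=
  ereal_sup [set (r%:E) | r in [set r | achievable q1 q1s p1 p2 p1s p2s r]].

End BFWiretap.

(* Fix the fading states.  In every block the main and the eavesdropper channel are
   both degraded versions of the BSC whose crossover is the smaller of their two
   crossovers; call Yb its output.  Fano's inequality and data processing give
   log M <= 1 + Pe log M + I(M; Yb).  Since Z is Yb passed through a doubly stochastic
   channel, H(Yb) <= H(Z), and data processing along X -> Yb -> Z bounds
   H(Z | M) - H(Yb | M) by H(Z | X) - H(Yb | X), a sum of binary entropy differences
   that does not depend on the codeword.  Hence I(M; Yb) <= I(M; Z) + (that sum), whose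
   average over the states is N B times the claimed bound; as Pe and the normalized
   leakage vanish, no achievable rate exceeds it. *)

From mathcomp Require Import all_boot all_order all_algebra.
From mathcomp Require Import all_classical all_reals all_analysis.
From mathcomp Require Import ring lra.
Import Order.TTheory GRing.Theory Num.Theory.
Set Implicit Arguments. Unset Strict Implicit. Unset Printing Implicit Defensive.
Local Open Scope ring_scope.

Section FiniteInformation.
Variable R : realType.

Lemma ln_le_subr1 (x : R) : 0 < x -> ln x <= x - 1.
Proof.
by move=> x_gt0; have := @le_ln1Dx R (x - 1); rewrite addrCA subrr addr0; apply; lra.
Qed.

Lemma log_sum_term (a b A B : R) : 0 <= a -> 0 <= b -> (0 < a -> 0 < b) ->
  0 < A -> 0 < B -> a * ln (A / B) <= a * ln (a / b) + b * A / B - a.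
Proof.
move=> a_ge0 b_ge0 ab A_gt0 B_gt0; have [->|a_neq0] := eqVneq a 0.
  by rewrite !mul0r subr0 add0r; apply: divr_ge0; [apply: mulr_ge0|]; lra.
have a_gt0 : 0 < a by rewrite lt_def a_neq0.
have b_gt0 := ab a_gt0.
have := ln_le_subr1 (divr_gt0 (divr_gt0 A_gt0 B_gt0) (divr_gt0 a_gt0 b_gt0)).
rewrite [ln (_ / (a / b))]ln_div ?posrE ?divr_gt0 // => /(ler_wpM2l a_ge0).
have -> : a * (A / B / (a / b) - 1) = b * A / B - a by field; rewrite !gt_eqF.
by rewrite mulrBr => le; lra.
Qed.

Lemma log_sum_inequality (I : finType) (a b : I -> R) :
  (forall i, 0 <= a i) -> (forall i, 0 <= b i) -> (forall i, 0 < a i -> 0 < b i) ->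
  (\sum_i a i) * ln ((\sum_i a i) / (\sum_i b i)) <= \sum_i a i * ln (a i / b i).
Proof.
move=> a_ge0 b_ge0 ab.
have [A0|A_neq0] := eqVneq (\sum_i a i) 0.
  rewrite A0 mul0r; apply: sumr_ge0 => i _.
  by rewrite (psumr_eq0P (fun i _ => a_ge0 i) A0) // mul0r.
have [i0 ai0_gt0] : exists i, 0 < a i.
  apply/existsP; apply: contraNT A_neq0; rewrite negb_exists => /forallP a_le0.
  by apply/eqP/big1 => i _; apply/le_anti; rewrite a_ge0 andbT leNgt a_le0.
have B_gt0 : 0 < \sum_i b i.
  by rewrite (bigD1 i0) //= ltr_pwDl ?ab ?sumr_ge0.
set A := \sum_i a i in A_neq0 *; set B := \sum_i b i in B_gt0 *.
have A_gt0 : 0 < A by rewrite lt_def A_neq0 sumr_ge0.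
have termwise : \sum_i a i * ln (A / B) <=
    \sum_i (a i * ln (a i / b i) + b i * A / B - a i).
  by apply: ler_sum => i _; exact: log_sum_term (a_ge0 i) (b_ge0 i) (@ab i) A_gt0 B_gt0.
rewrite -mulr_suml -/A !big_split /= sumrN -/A -!mulr_suml -/B in termwise.
by rewrite (mulrAC B) divff ?gt_eqF // mul1r addrK in termwise.
Qed.

Definition is_pmf (X : finType) (u : X -> R) : Prop :=
  (forall x, 0 <= u x) /\ \sum_x u x = 1.

(* Kernels are indexed output first: [K y x] is the probability of output [y] on
   input [x]. *)
Definition is_channel (X Y : finType) (K : Y -> X -> R) : Prop :=
  (forall y x, 0 <= K y x) /\ (forall x, \sum_y K y x = 1).

Definition chan (X Y : finType) (K : Y -> X -> R) (u : X -> R) : Y -> R :=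
  fun y => \sum_x K y x * u x.

Definition cascade (X Y Z : finType) (K1 : Z -> Y -> R) (K2 : Y -> X -> R) : Z -> X -> R :=
  fun z x => \sum_y K1 z y * K2 y x.

Definition mixture (J Y : finType) (w : J -> R) (v : J -> Y -> R) : Y -> R :=
  fun y => \sum_j w j * v j y.

(* Since [u y / 0 = 0] and [ln 0 = 0], this is the relative entropy only when [u y > 0]
   implies [m y > 0], which the lemmas below assume. *)
Definition divergence (Y : finType) (u m : Y -> R) : R := \sum_y u y * ln (u y / m y).

Definition mutual_info (J Y : finType) (w : J -> R) (v : J -> Y -> R) : R :=
  \sum_j w j * divergence (v j) (mixture w v).

Definition entropy (Y : finType) (v : Y -> R) : R := - \sum_y v y * ln (v y).

Lemma chan_ge0 (X Y : finType) (K : Y -> X -> R) (u : X -> R) y :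
  (forall y x, 0 <= K y x) -> (forall x, 0 <= u x) -> 0 <= chan K u y.
Proof. by move=> K_ge0 u_ge0; apply: sumr_ge0 => x _; apply: mulr_ge0. Qed.

Lemma is_pmf_chan (X Y : finType) (K : Y -> X -> R) (u : X -> R) :
  is_channel K -> is_pmf u -> is_pmf (chan K u).
Proof.
move=> [K_ge0 K_sum] [u_ge0 u_sum]; split=> [y|]; first exact: chan_ge0.
rewrite exchange_big /= -u_sum; apply: eq_bigr => x _.
by rewrite -mulr_suml K_sum mul1r.
Qed.

Lemma chan_cascade (X Y Z : finType) (K1 : Z -> Y -> R) (K2 : Y -> X -> R) u :
  chan (cascade K1 K2) u = chan K1 (chan K2 u).
Proof.
apply/funext => z; rewrite /chan /cascade.
under eq_bigr do rewrite mulr_suml.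
rewrite exchange_big /=; apply: eq_bigr => y _; rewrite mulr_sumr.
by apply: eq_bigr => x _; rewrite mulrA.
Qed.

Lemma is_channel_cascade (X Y Z : finType) (K1 : Z -> Y -> R) (K2 : Y -> X -> R) :
  is_channel K1 -> is_channel K2 -> is_channel (cascade K1 K2).
Proof.
move=> K1_chan [K2_ge0 K2_sum]; split=> [z x|x].
  by apply: sumr_ge0 => y _; apply: mulr_ge0; [case: K1_chan|].
by have [_] := is_pmf_chan K1_chan (conj (K2_ge0^~ x) (K2_sum x)).
Qed.

Lemma mixture_chan (J X Y : finType) (w : J -> R) (v : J -> X -> R) (K : Y -> X -> R) :
  mixture w (fun j => chan K (v j)) = chan K (mixture w v).
Proof.
apply/funext => y; rewrite /mixture /chan.
under eq_bigr do rewrite mulr_sumr.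
rewrite exchange_big /=; apply: eq_bigr => x _; rewrite mulr_sumr.
by apply: eq_bigr => j _; rewrite mulrCA.
Qed.

Lemma mixture_gt0 (J Y : finType) (w : J -> R) (v : J -> Y -> R) j y :
  (forall j, 0 <= w j) -> (forall j y, 0 <= v j y) ->
  0 < w j * v j y -> 0 < mixture w v y.
Proof.
move=> w_ge0 v_ge0 wv_gt0; rewrite /mixture (bigD1 j) //= ltr_pwDl //.
by apply: sumr_ge0 => i _; apply: mulr_ge0.
Qed.

Lemma mutual_infoE (J Y : finType) (w : J -> R) (v : J -> Y -> R) :
  (forall j, 0 <= w j) -> (forall j y, 0 <= v j y) ->
  mutual_info w v = entropy (mixture w v) - \sum_j w j * entropy (v j).
Proof.
move=> w_ge0 v_ge0; rewrite /mutual_info /divergence /entropy.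
under eq_bigr do rewrite mulr_sumr.
have split_ln j y : w j * (v j y * ln (v j y / mixture w v y)) =
    w j * (v j y * ln (v j y)) - w j * v j y * ln (mixture w v y).
  have [wv0|wv_neq0] := eqVneq (w j * v j y) 0.
    by rewrite !mulrA wv0 !mul0r subr0.
  have wv_gt0 : 0 < w j * v j y by rewrite lt_def wv_neq0 mulr_ge0.
  have v_gt0 : 0 < v j y.
    by rewrite lt_def v_ge0 andbT; apply: contraNneq wv_neq0 => ->; rewrite mulr0.
  by rewrite ln_div ?posrE ?(mixture_gt0 w_ge0 v_ge0 wv_gt0) // !mulrBr -[in RHS]mulrA.
under eq_bigr do under eq_bigr do rewrite split_ln.
under eq_bigr do rewrite sumrB -mulr_sumr.
rewrite sumrB [X in _ - X]exchange_big /=.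
under [X in _ - X]eq_bigr do rewrite -mulr_suml.
rewrite [X in _ = _ - X](eq_bigr _ (fun j _ => mulrN _ _)).
by rewrite sumrN opprK addrC.
Qed.

Lemma divergence_chan_le (X Y : finType) (K : Y -> X -> R) (u m : X -> R) :
  (forall y x, 0 <= K y x) -> (forall x, \sum_y K y x = 1) ->
  (forall x, 0 <= u x) -> (forall x, 0 <= m x) -> (forall x, 0 < u x -> 0 < m x) ->
  divergence (chan K u) (chan K m) <= divergence u m.
Proof.
move=> K_ge0 K_sum u_ge0 m_ge0 um.
have log_sum_output y : chan K u y * ln (chan K u y / chan K m y) <=
    \sum_x K y x * (u x * ln (u x / m x)).
  have Kum x : 0 < K y x * u x -> 0 < K y x * m x.
    have [->|K_neq0] := eqVneq (K y x) 0; first by rewrite mul0r ltxx.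
    have K_gt0 : 0 < K y x by rewrite lt_def K_neq0 K_ge0.
    by rewrite !pmulr_rgt0 //; exact: um.
  apply: le_trans (log_sum_inequality (fun x => mulr_ge0 (K_ge0 y x) (u_ge0 x))
      (fun x => mulr_ge0 (K_ge0 y x) (m_ge0 x)) Kum) _.
  apply: ler_sum => x _; have [->|K_neq0] := eqVneq (K y x) 0; first by rewrite !mul0r.
  by rewrite -mulrA invfM mulrACA divff // mul1r.
apply: le_trans (ler_sum _ (fun y _ => log_sum_output y)) _.
by rewrite exchange_big /=; apply: ler_sum => x _; rewrite -mulr_suml K_sum mul1r.
Qed.

Lemma divergence_ge0 (X : finType) (u m : X -> R) :
  is_pmf u -> (forall x, 0 <= m x) -> \sum_x m x <= 1 -> (forall x, 0 < u x -> 0 < m x) ->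
  0 <= divergence u m.
Proof.
move=> [u_ge0 u_sum] m_ge0 m_sum um.
apply: le_trans (log_sum_inequality u_ge0 m_ge0 um); rewrite u_sum mul1r div1r.
have [->|m_neq0] := eqVneq (\sum_x m x) 0; first by rewrite invr0 ln0.
by rewrite ln_ge0 // invf_ge1 // lt_def m_neq0 sumr_ge0.
Qed.

Lemma entropy_le_chan (X Y : finType) (K : Y -> X -> R) (u : X -> R) :
  is_channel K -> (forall y, \sum_x K y x = 1) -> (forall x, 0 <= u x) ->
  entropy u <= entropy (chan K u).
Proof.
move=> [K_ge0 K_sum] K_row u_ge0.
have := divergence_chan_le K_ge0 K_sum u_ge0 (fun=> ler01) (fun _ _ => ltr01).
have -> : chan K (fun=> 1) = fun=> 1.
  by apply/funext => y; rewrite /chan; under eq_bigr do rewrite mulr1; exact: K_row.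
by rewrite /divergence /entropy lerN2; under eq_bigr do rewrite divr1;
  under [X in _ <= X]eq_bigr do rewrite divr1.
Qed.

Lemma mutual_info_chan_le (J X Y : finType) (w : J -> R) (v : J -> X -> R)
    (K : Y -> X -> R) :
  (forall j, 0 <= w j) -> (forall j x, 0 <= v j x) -> is_channel K ->
  mutual_info w (fun j => chan K (v j)) <= mutual_info w v.
Proof.
move=> w_ge0 v_ge0 [K_ge0 K_sum]; rewrite /mutual_info mixture_chan.
apply: ler_sum => j _; have [->|w_neq0] := eqVneq (w j) 0; first by rewrite !mul0r.
apply: ler_wpM2l => //; apply: divergence_chan_le => // [x|x v_gt0].
  by apply: sumr_ge0 => i _; apply: mulr_ge0.
by apply: (mixture_gt0 (j := j)) => //; rewrite mulr_gt0 // lt_def w_neq0 w_ge0.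
Qed.

Lemma is_pmf_uniform (M : nat) : (0 < M)%N -> is_pmf (fun _ : 'I_M => M%:R^-1 : R).
Proof.
move=> M_gt0; split=> [_|]; first by rewrite invr_ge0.
by rewrite sumr_const card_ord -[_ *+ M]mulr_natr mulVf // pnatr_eq0 -lt0n.
Qed.

Definition decoding_error (Y : finType) (M : nat) (v : 'I_M -> Y -> R) (g : Y -> 'I_M) : R :=
  \sum_m \sum_y M%:R^-1 * v m y * (if g y != m then 1 else 0).

(* Fano's auxiliary sub-probability: mass 1/2 on the decoded message and 1/(2M) on
   every other one, so that ln (M^-1 / fano_weight) is ln 2 - ln M, plus ln M on errors. *)
Definition fano_weight (Y : finType) (M : nat) (g : Y -> 'I_M) (m : 'I_M) (y : Y) : R :=
  if g y == m then 2^-1 else (2 * M%:R)^-1.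

Lemma fano_weight_gt0 (Y : finType) (M : nat) (g : Y -> 'I_M) m y :
  (0 < M)%N -> 0 < fano_weight g m y.
Proof.
by move=> M_gt0; rewrite /fano_weight; case: ifP; rewrite invr_gt0 ?mulr_gt0 ?ltr0n.
Qed.

Lemma sum_fano_weight_le1 (Y : finType) (M : nat) (g : Y -> 'I_M) y :
  \sum_m fano_weight g m y <= 1.
Proof.
rewrite (bigD1 (g y)) //= /fano_weight eqxx.
rewrite (eq_bigr (fun=> (2 * M%:R)^-1)) => [|m /negbTE]; last by rewrite eq_sym => ->.
rewrite sumr_const cardC1 card_ord -mulr_natr.
have M_gt0 : (0 < M)%N := leq_ltn_trans (leq0n _) (ltn_ord (g y)).
have : (2 * M%:R)^-1 * M.-1%:R <= (2 * M%:R)^-1 * M%:R :> R.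
  by rewrite ler_wpM2l ?invr_ge0 ?mulr_ge0 // ler_nat leq_pred.
have -> : (2 * M%:R)^-1 * M%:R = 2^-1 :> R by rewrite invfM mulfVK // pnatr_eq0 -lt0n.
lra.
Qed.

Lemma ln_fano_weight (Y : finType) (M : nat) (g : Y -> 'I_M) m y : (0 < M)%N ->
  ln (M%:R^-1 / fano_weight g m y) = ln 2 - ln M%:R + ln M%:R * (if g y != m then 1 else 0).
Proof.
move=> M_gt0; have M_pos : 0 < M%:R :> R by rewrite ltr0n.
rewrite /fano_weight; case: eqP => _ /=.
  by rewrite invrK lnM ?posrE ?invr_gt0 // lnV ?posrE //; lra.
by rewrite invrK mulrCA mulVf ?mulr1 ?gt_eqF //; lra.
Qed.

Lemma fano (Y : finType) (M : nat) (v : 'I_M -> Y -> R) (g : Y -> 'I_M) :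
  (0 < M)%N -> (forall m, is_pmf (v m)) ->
  ln M%:R <= ln 2 + decoding_error v g * ln M%:R + mutual_info (fun=> M%:R^-1) v.
Proof.
move=> M_gt0 v_pmf; have M_pos : 0 < M%:R :> R by rewrite ltr0n.
set w := M%:R^-1; have w_gt0 : 0 < w by rewrite invr_gt0.
have v_ge0 m y : 0 <= v m y by case: (v_pmf m).
set mix := mixture (fun=> w) v.
have mix_ge0 y : 0 <= mix y.
  by apply: sumr_ge0 => m _; exact: mulr_ge0 (ltW w_gt0) (v_ge0 m y).
have mix_gt0 m y : 0 < v m y -> 0 < mix y.
  move=> v_gt0; apply: (mixture_gt0 (j := m)) => [_||]; [exact: ltW|by []|exact: mulr_gt0].
have [_ sum_w] := is_pmf_uniform M_gt0.
have mix_sum : \sum_y mix y = 1.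
  rewrite exchange_big /= -sum_w; apply: eq_bigr => m _.
  by rewrite -mulr_sumr (proj2 (v_pmf m)) mulr1.
pose a (p : 'I_M * Y) := w * v p.1 p.2.
pose b (p : 'I_M * Y) := mix p.2 * fano_weight g p.1 p.2.
have a_pmf : is_pmf a.
  split=> [p|]; first exact: mulr_ge0 (ltW w_gt0) (v_ge0 _ _).
  rewrite -(pair_big xpredT xpredT (fun m y => w * v m y)) /= -sum_w.
  by apply: eq_bigr => m _; rewrite -mulr_sumr (proj2 (v_pmf m)) mulr1.
have b_ge0 p : 0 <= b p by exact: mulr_ge0 (mix_ge0 _) (ltW (fano_weight_gt0 _ _ _ M_gt0)).
have b_sum : \sum_p b p <= 1.
  rewrite -(pair_big xpredT xpredT (fun m y => mix y * fano_weight g m y)) /= exchange_big.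
  rewrite -mix_sum ler_sum // => y _; rewrite -mulr_sumr ler_piMr //.
  exact: sum_fano_weight_le1.
have ab p : 0 < a p -> 0 < b p.
  by rewrite pmulr_rgt0 // => v_gt0; rewrite mulr_gt0 ?fano_weight_gt0 ?(mix_gt0 p.1).
have split_term p : a p * ln (a p / b p) = w * (v p.1 p.2 * ln (v p.1 p.2 / mix p.2))
    + a p * (ln 2 - ln M%:R + ln M%:R * (if g p.2 != p.1 then 1 else 0)).
  rewrite -ln_fano_weight // /a /b; have [->|v_neq0] := eqVneq (v p.1 p.2) 0.
    by rewrite !(mulr0, mul0r) addr0.
  have v_gt0 : 0 < v p.1 p.2 by rewrite lt_def v_neq0 v_ge0.
  have r_gt0 := fano_weight_gt0 g p.1 p.2 M_gt0; have mix_pos := mix_gt0 _ _ v_gt0.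
  have -> : w * v p.1 p.2 / (mix p.2 * fano_weight g p.1 p.2) =
      v p.1 p.2 / mix p.2 * (w / fano_weight g p.1 p.2) by field; rewrite !gt_eqF.
  by rewrite lnM ?posrE ?divr_gt0 // mulrDr -mulrA.
have := divergence_ge0 a_pmf b_ge0 b_sum ab.
rewrite /divergence (eq_bigr _ (fun p _ => split_term p)) big_split /=.
have -> : \sum_p w * (v p.1 p.2 * ln (v p.1 p.2 / mix p.2)) = mutual_info (fun=> w) v.
  rewrite -(pair_big xpredT xpredT (fun m y => w * (v m y * ln (v m y / mix y)))) /=.
  by apply: eq_bigr => m _; rewrite mulr_sumr.
set c := ln 2 - ln M%:R.
have -> : \sum_p a p * (c + ln M%:R * (if g p.2 != p.1 then 1 else 0)) =
    c + decoding_error v g * ln M%:R.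
  under eq_bigr do rewrite mulrDr.
  rewrite big_split /= -mulr_suml (proj2 a_pmf) mul1r /decoding_error pair_big /=.
  by rewrite mulr_suml; congr (_ + _); apply: eq_bigr => p _; rewrite [ln _ * _]mulrC mulrA.
by rewrite /c; lra.
Qed.

Lemma entropy_chan_cascade_gap (X Y Z : finType) (Kb : Y -> X -> R) (Ke : Z -> Y -> R)
    (u : X -> R) (D : R) :
  (forall y x, 0 <= Kb y x) -> is_channel Ke -> is_pmf u ->
  (forall x, entropy (cascade Ke Kb ^~ x) - entropy (Kb ^~ x) = D) ->
  entropy (chan (cascade Ke Kb) u) - entropy (chan Kb u) <= D.
Proof.
move=> Kb_ge0 Ke_chan [u_ge0 u_sum] gap.
have := mutual_info_chan_le (v := fun x => Kb ^~ x) u_ge0 (fun x y => Kb_ge0 y x) Ke_chan.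
have -> : (fun x => chan Ke (Kb ^~ x)) = fun x => cascade Ke Kb ^~ x by [].
have mixture_col (T : finType) (K : T -> X -> R) : mixture u (fun x => K ^~ x) = chan K u.
  by apply/funext => t; apply: eq_bigr => x _; rewrite mulrC.
have [Ke_ge0 _] := Ke_chan.
rewrite !mutual_infoE // => [|x z]; last by apply: sumr_ge0 => y _; apply: mulr_ge0.
have -> : \sum_x u x * entropy (cascade Ke Kb ^~ x) = \sum_x u x * entropy (Kb ^~ x) + D.
  rewrite -[X in _ + X]mul1r -u_sum mulr_suml -big_split /=.
  by apply: eq_bigr => x _; rewrite -mulrDr -(gap x) addrC subrK.
by rewrite !mixture_col; lra.
Qed.

Lemma mutual_info_cascade_gap (J X Y Z : finType) (w : J -> R) (f : J -> X -> R)
    (Kb : Y -> X -> R) (Ke : Z -> Y -> R) (D : R) :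
  is_pmf w -> (forall j, is_pmf (f j)) -> is_channel Kb -> is_channel Ke ->
  (forall z, \sum_y Ke z y = 1) ->
  (forall x, entropy (cascade Ke Kb ^~ x) - entropy (Kb ^~ x) = D) ->
  mutual_info w (fun j => chan Kb (f j)) <=
    mutual_info w (fun j => chan (cascade Ke Kb) (f j)) + D.
Proof.
move=> [w_ge0 w_sum] f_pmf Kb_chan Ke_chan Ke_row gap.
have out_ge0 (T : finType) (K : T -> X -> R) : is_channel K -> forall j t, 0 <= chan K (f j) t.
  by move=> K_chan j t; case: (is_pmf_chan K_chan (f_pmf j)) => ->.
have Kb_out_ge0 := out_ge0 _ _ Kb_chan.
have Kc_out_ge0 := out_ge0 _ _ (is_channel_cascade Ke_chan Kb_chan).
rewrite !mutual_infoE //.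
have mix_c : mixture w (fun j => chan (cascade Ke Kb) (f j)) =
    chan Ke (mixture w (fun j => chan Kb (f j))).
  by rewrite -mixture_chan; congr mixture; apply/funext => j; rewrite chan_cascade.
have mix_ge0 y : 0 <= mixture w (fun j => chan Kb (f j)) y.
  by apply: sumr_ge0 => j _; rewrite mulr_ge0.
have := entropy_le_chan Ke_chan Ke_row mix_ge0; rewrite -mix_c.
have gap_j j : entropy (chan (cascade Ke Kb) (f j)) - entropy (chan Kb (f j)) <= D.
  by apply: entropy_chan_cascade_gap => //; case: Kb_chan.
have : \sum_j w j * (entropy (chan (cascade Ke Kb) (f j)) - entropy (chan Kb (f j))) <= D.
  rewrite -[leRHS]mul1r -w_sum mulr_suml.
  by apply: ler_sum => j _; rewrite ler_wpM2l.
rewrite (eq_bigr _ (fun j _ => mulrBr _ _ _)) sumrB.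
lra.
Qed.

Lemma fano_degraded (X Y Yb Z : finType) (M : nat) (f : 'I_M -> X -> R) (g : Y -> 'I_M)
    (Kb : Yb -> X -> R) (Kd : Y -> Yb -> R) (Ke : Z -> Yb -> R) (D : R) :
  (0 < M)%N -> (forall m, is_pmf (f m)) ->
  is_channel Kb -> is_channel Kd -> is_channel Ke -> (forall z, \sum_y Ke z y = 1) ->
  (forall x, entropy (cascade Ke Kb ^~ x) - entropy (Kb ^~ x) = D) ->
  ln M%:R <= ln 2 + decoding_error (fun m => chan (cascade Kd Kb) (f m)) g * ln M%:R
    + mutual_info (fun=> M%:R^-1) (fun m => chan (cascade Ke Kb) (f m)) + D.
Proof.
move=> M_gt0 f_pmf Kb_chan Kd_chan Ke_chan Ke_row gap.
have w_pmf := is_pmf_uniform M_gt0.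
have Ka_out_pmf m := is_pmf_chan (is_channel_cascade Kd_chan Kb_chan) (f_pmf m).
apply: le_trans (fano g M_gt0 Ka_out_pmf) _.
rewrite -!addrA !lerD2l (_ : (fun m => _) = fun m => chan Kd (chan Kb (f m))).
  apply: le_trans (mutual_info_cascade_gap w_pmf f_pmf Kb_chan Ke_chan Ke_row gap).
  apply: mutual_info_chan_le => [_|j y|//]; first by rewrite invr_ge0.
  by case: (is_pmf_chan Kb_chan (f_pmf j)) => ->.
by apply/funext => m; rewrite chan_cascade.
Qed.

End FiniteInformation.

Section MemorylessBSC.
Variables (R : realType) (K : finType).
Local Notation W := {ffun K -> bool}.

Definition bsc (p : K -> R) (z y : W) : R :=
  \prod_k (if z k == y k then 1 - p k else p k).

Definition H2ln (p : R) : R := - (p * ln p) - (1 - p) * ln (1 - p).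

Lemma sum_ffun_prod (F : K -> bool -> R) :
  \sum_(z : W) \prod_k F k (z k) = \prod_k (F k true + F k false).
Proof.
rewrite -(bigA_distr_bigA (fun k t => F k t)) /=.
by apply: eq_bigr => k _; rewrite big_bool.
Qed.

Lemma sum_ffun_prod_coord (F : K -> bool -> R) (k0 : K) (L : bool -> R) :
  (forall k, k != k0 -> F k true + F k false = 1) ->
  \sum_(z : W) (\prod_k F k (z k)) * L (z k0) = F k0 true * L true + F k0 false * L false.
Proof.
move=> F_sum1; pose G k t := F k t * (if k == k0 then L t else 1).
have -> : \sum_(z : W) (\prod_k F k (z k)) * L (z k0) = \sum_(z : W) \prod_k G k (z k).
  apply: eq_bigr => z _; rewrite big_split /=; congr (_ * _).
  by rewrite (bigD1 k0) //= eqxx big1 ?mulr1 // => k /negbTE ->.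
rewrite sum_ffun_prod (bigD1 k0) //= big1 ?mulr1 /G ?eqxx // => k k_neq0.
by rewrite (negbTE k_neq0) !mulr1 F_sum1.
Qed.

Lemma sum_bsc_out (p : K -> R) (y : W) : \sum_z bsc p z y = 1.
Proof.
rewrite (sum_ffun_prod (fun k t => if t == y k then 1 - p k else p k)) big1 // => k _.
by case: (y k) => /=; ring.
Qed.

Lemma sum_bsc_in (p : K -> R) (z : W) : \sum_y bsc p z y = 1.
Proof.
rewrite (sum_ffun_prod (fun k t => if z k == t then 1 - p k else p k)) big1 // => k _.
by case: (z k) => /=; ring.
Qed.

Lemma is_channel_bsc (p : K -> R) : (forall k, 0 <= p k <= 1) -> is_channel (bsc p).
Proof.
move=> p01; split=> [z y|]; last exact: sum_bsc_out.
by apply: prodr_ge0 => k _; case: ifP => _; have := p01 k; lra.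
Qed.

Lemma bsc_cascade (a b d : K -> R) :
  (forall k, a k = b k + d k * (1 - 2 * b k)) -> bsc a = cascade (bsc d) (bsc b).
Proof.
move=> abd; apply/funext => z; apply/funext => x; rewrite /cascade /bsc.
under [RHS]eq_bigr do rewrite -big_split /=.
rewrite (sum_ffun_prod (fun k t => (if z k == t then 1 - d k else d k) *
   (if t == x k then 1 - b k else b k))).
by apply: eq_bigr => k _; rewrite abd; case: (z k); case: (x k) => /=; ring.
Qed.

Lemma ln_prod (G : K -> R) : (forall k, 0 < G k) -> ln (\prod_k G k) = \sum_k ln (G k).
Proof.
move=> G_gt0; suff [] : 0 < \prod_k G k /\ ln (\prod_k G k) = \sum_k ln (G k) by [].
apply: (big_rec2 (fun a b => 0 < a /\ ln a = b)); first by rewrite ln1 ltr01.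
move=> k y1 y2 _ [y1_gt0 <-]; split; first exact: mulr_gt0.
by rewrite lnM ?posrE.
Qed.

Lemma entropy_bsc (p : K -> R) (x : W) : (forall k, 0 <= p k <= 1) ->
  entropy (bsc p ^~ x) = \sum_k H2ln (p k).
Proof.
move=> p01; rewrite /entropy.
pose G k t := if t == x k then 1 - p k else p k.
have G_ge0 k t : 0 <= G k t by rewrite /G; case: ifP => _; have := p01 k; lra.
have split_ln (z : W) : bsc p z x * ln (bsc p z x) = \sum_k bsc p z x * ln (G k (z k)).
  rewrite -mulr_sumr; have [->|bsc_neq0] := eqVneq (bsc p z x) 0; first by rewrite !mul0r.
  congr (_ * _); apply: ln_prod => k; rewrite lt_def G_ge0 andbT.
  apply: contra bsc_neq0 => /eqP G0.
  by rewrite /bsc (bigD1 k) //= mulf_eq0; apply/orP; left; apply/eqP.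
rewrite (eq_bigr _ (fun z _ => split_ln z)) exchange_big /= -sumrN.
apply: eq_bigr => k _.
rewrite (sum_ffun_prod_coord (F := G) (k0 := k) (fun t => ln (G k t))) => [|i _]; last first.
  by rewrite /G; case: (x i) => /=; ring.
by rewrite /G /H2ln; case: (x k) => /=; ring.
Qed.

(* Solves [1 - 2 p = (1 - 2 q) (1 - 2 d)] for [d]; at [q = 1/2] the hypotheses of
   [cascade_crossoverP] force [p = q] and any value works. *)
Definition cascade_crossover (p q : R) : R :=
  if q == 2^-1 then 0 else (p - q) / (1 - 2 * q).

Lemma cascade_crossoverP (p q : R) : 0 <= q -> q <= p -> p <= 2^-1 ->
  0 <= cascade_crossover p q <= 1 /\ p = q + cascade_crossover p q * (1 - 2 * q).
Proof.
move=> q_ge0 qp p_le; rewrite /cascade_crossover; case: eqP => [q_half|/eqP q_neq].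
  by rewrite q_half in qp q_ge0 *; split; [rewrite lexx ler01|rewrite mul0r addr0; lra].
have q_lt : q < 2^-1 by rewrite lt_neqAle q_neq /=; lra.
have den_gt0 : 0 < 1 - 2 * q by lra.
split; last by field; rewrite gt_eqF.
by rewrite divr_ge0 ?ler_pdivrMr // ?mul1r; lra.
Qed.

Lemma fano_bsc_degraded (M : nat) (f : 'I_M -> W -> R) (g : W -> 'I_M)
    (pa pb pc : K -> R) :
  (0 < M)%N -> (forall m, is_pmf (f m)) ->
  (forall k, [/\ 0 <= pb k, pb k <= pa k, pa k <= 2^-1, pb k <= pc k & pc k <= 2^-1]) ->
  ln M%:R <= ln 2 + decoding_error (fun m => chan (bsc pa) (f m)) g * ln M%:R
    + mutual_info (fun=> M%:R^-1) (fun m => chan (bsc pc) (f m))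
    + \sum_k (H2ln (pc k) - H2ln (pb k)).
Proof.
move=> M_gt0 f_pmf p_order.
pose da k := cascade_crossover (pa k) (pb k); pose dc k := cascade_crossover (pc k) (pb k).
have [da01 pa_da] :
    (forall k, 0 <= da k <= 1) /\ forall k, pa k = pb k + da k * (1 - 2 * pb k).
  by split=> k; case: (p_order k) => *; have [] := @cascade_crossoverP (pa k) (pb k).
have [dc01 pc_dc] :
    (forall k, 0 <= dc k <= 1) /\ forall k, pc k = pb k + dc k * (1 - 2 * pb k).
  by split=> k; case: (p_order k) => *; have [] := @cascade_crossoverP (pc k) (pb k).
have p01 (p : K -> R) : (forall k, 0 <= p k <= 2^-1) -> forall k, 0 <= p k <= 1.
  by move=> p_le k; have := p_le k; lra.
have pb01 : forall k, 0 <= pb k <= 1 by apply: p01 => k; case: (p_order k) => *; lra.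
have pc01 : forall k, 0 <= pc k <= 1 by apply: p01 => k; case: (p_order k) => *; lra.
rewrite (bsc_cascade pa_da) (bsc_cascade pc_dc).
apply: fano_degraded => //; try exact: is_channel_bsc; first exact: sum_bsc_in.
by move=> x; rewrite -(bsc_cascade pc_dc) !entropy_bsc // [RHS]sumrB.
Qed.

End MemorylessBSC.

Section BlockFading.
Variable R : realType.

Definition block_crossover (N B : nat) (pa pb : R) (s : state B) (k : 'I_B * 'I_N) : R :=
  if s k.1 then pa else pb.

(* Both channels of a block are degraded versions of the BSC with the smaller of their
   two crossover probabilities. *)
Definition common_crossover (N B : nat) (p1 p1s p2 : R) (s ss : state B)
    (k : 'I_B * 'I_N) : R :=
  if s k.1 then p1 else if ss k.1 then p1s else p2.

Lemma common_crossover_degraded (p1 p1s p2 p2s : R) N B (s ss : state B)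
    (k : 'I_B * 'I_N) :
  0 <= p1 -> p1 <= p1s -> p1s <= p2 -> p2 <= p2s -> p2s <= 2^-1 ->
  [/\ 0 <= common_crossover p1 p1s p2 s ss k,
      common_crossover p1 p1s p2 s ss k <= block_crossover p1 p2 s k,
      block_crossover p1 p2 s k <= 2^-1,
      common_crossover p1 p1s p2 s ss k <= block_crossover p1s p2s ss k &
      block_crossover p1s p2s ss k <= 2^-1].
Proof.
by rewrite /common_crossover /block_crossover => *; case: (s k.1); case: (ss k.1); split; lra.
Qed.

Lemma bfbsc_bsc (pa pb : R) N B (s : state B) (x y : word N B) :
  bfbsc pa pb s x y = bsc (block_crossover pa pb s) y x.
Proof. by []. Qed.

Lemma is_pmf_pstate (q : R) B : 0 <= q <= 1 -> is_pmf (@pstate R q B).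
Proof.
move=> q01; split=> [s|]; first by apply: prodr_ge0 => k _; case: (s k); lra.
rewrite (sum_ffun_prod (fun k (t : bool) => if t then q else 1 - q)) big1 // => k _.
by rewrite subrKC.
Qed.

Lemma sum_pstate_coord (q : R) B (k : 'I_B) (L : bool -> R) :
  \sum_(s : state B) pstate q s * L (s k) = q * L true + (1 - q) * L false.
Proof.
by rewrite (sum_ffun_prod_coord (F := fun k (t : bool) => if t then q else 1 - q)) // => *;
  rewrite subrKC.
Qed.

Lemma sum_pstate_blocks (q qs : R) N B (h : bool -> bool -> R) :
  \sum_(s : state B) \sum_(ss : state B) pstate q s * pstate qs ss *
     \sum_(k : 'I_B * 'I_N) h (s k.1) (ss k.1)
  = (N * B)%:R * (q * qs * h true true + q * (1 - qs) * h true false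
       + (1 - q) * qs * h false true + (1 - q) * (1 - qs) * h false false).
Proof.
under eq_bigr do under eq_bigr do rewrite mulr_sumr.
under eq_bigr do rewrite exchange_big /=.
rewrite exchange_big /= (eq_bigr (fun _ => q * qs * h true true + q * (1 - qs) * h true false
       + (1 - q) * qs * h false true + (1 - q) * (1 - qs) * h false false)).
  by rewrite sumr_const card_prod !card_ord mulnC mulr_natl.
move=> k _; under eq_bigr do under eq_bigr do rewrite -mulrA.
under eq_bigr => s _ do rewrite -mulr_sumr (sum_pstate_coord qs k.1 (h (s k.1))).
by rewrite (sum_pstate_coord q k.1 (fun t => qs * h t true + (1 - qs) * h t false)); ring.
Qed.

Lemma err_probE (q1 q1s p1 p2 : R) N B M (f : 'I_M -> word N B -> R)
    (g : word N B -> state B -> state B -> 'I_M) :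
  err_prob q1 q1s p1 p2 f g = \sum_(s : state B) \sum_(ss : state B)
    pstate q1 s * pstate q1s ss *
    decoding_error (fun m => chan (bsc (block_crossover p1 p2 s)) (f m)) (fun y => g y s ss).
Proof.
rewrite /err_prob; apply: eq_bigr => s _; apply: eq_bigr => ss _.
rewrite /decoding_error mulr_sumr; apply: eq_bigr => m _.
rewrite exchange_big mulr_sumr /=; apply: eq_bigr => y _.
rewrite /chan !big_distrr !big_distrl !big_distrr /=; apply: eq_bigr => x _.
by rewrite bfbsc_bsc; ring.
Qed.

Lemma leakageE (q1 q1s p1s p2s : R) N B M (f : 'I_M -> word N B -> R) :
  leakage q1 q1s p1s p2s f * ln 2 = \sum_(s : state B) \sum_(ss : state B)
    pstate q1 s * pstate q1s ss *
    mutual_info (fun=> M%:R^-1) (fun m => chan (bsc (block_crossover p1s p2s ss)) (f m)).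
Proof.
have zcondE ss m : zcond p1s p2s f m ss = chan (bsc (block_crossover p1s p2s ss)) (f m).
  by apply/funext => z; apply: eq_bigr => x _; rewrite bfbsc_bsc mulrC.
have zmargE ss : zmarg p1s p2s f ss =
    mixture (fun=> M%:R^-1) (fun m => chan (bsc (block_crossover p1s p2s ss)) (f m)).
  by apply/funext => z; rewrite /zmarg mulr_sumr; apply: eq_bigr => m _; rewrite zcondE.
have ln2_neq0 : ln 2 != 0 :> R by rewrite gt_eqF // ln_gt0 // ltr1n.
rewrite /leakage mulr_suml; apply: eq_bigr => s _; rewrite mulr_suml; apply: eq_bigr => ss _.
rewrite -mulrA; congr (_ * _); rewrite /mutual_info /divergence mulr_suml.
apply: eq_bigr => m _; rewrite mulr_suml mulr_sumr; apply: eq_bigr => z _.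
by rewrite zcondE zmargE /log2 -!mulrA mulVf ?mulr1.
Qed.

Lemma code_converse_ln (q1 q1s p1 p1s p2 p2s : R) N B M (f : 'I_M -> word N B -> R)
    (g : word N B -> state B -> state B -> 'I_M) :
  0 <= q1 <= 1 -> 0 <= q1s <= 1 ->
  0 <= p1 -> p1 <= p1s -> p1s <= p2 -> p2 <= p2s -> p2s <= 2^-1 ->
  (0 < M)%N -> is_encoder f ->
  ln M%:R <= ln 2 + err_prob q1 q1s p1 p2 f g * ln M%:R + leakage q1 q1s p1s p2s f * ln 2
    + (N * B)%:R * (q1 * q1s * H2ln p1s + (1 - q1s) * H2ln p2s - q1 * H2ln p1
        - (1 - q1) * (1 - q1s) * H2ln p2).
Proof.
move=> q1_01 q1s_01 p1_ge0 p1_le p1s_le p2_le p2s_le M_gt0 f_enc.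
have f_pmf m : is_pmf (f m) by case: (f_enc m).
have [ps_ge0 ps_sum] := is_pmf_pstate B q1_01.
have [pss_ge0 pss_sum] := is_pmf_pstate B q1s_01.
pose w (s ss : state B) := pstate q1 s * pstate q1s ss.
have w_sum : \sum_s \sum_ss w s ss = 1.
  by rewrite -ps_sum; apply: eq_bigr => s _; rewrite -mulr_sumr pss_sum mulr1.
pose de s ss := decoding_error (fun m => chan (bsc (block_crossover p1 p2 s)) (f m))
  (fun y => g y s ss).
pose mi ss :=
  mutual_info (fun=> M%:R^-1) (fun m => chan (bsc (block_crossover p1s p2s ss)) (f m)).
pose gap s ss := \sum_(k : 'I_B * 'I_N)
  (H2ln (block_crossover p1s p2s ss k) - H2ln (common_crossover p1 p1s p2 s ss k)).
have avg : \sum_s \sum_ss w s ss * ln M%:R <=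
    \sum_s \sum_ss w s ss * (ln 2 + de s ss * ln M%:R + mi ss + gap s ss).
  apply: ler_sum => s _; apply: ler_sum => ss _; apply: ler_wpM2l; first exact: mulr_ge0.
  exact (fano_bsc_degraded (fun y => g y s ss) M_gt0 f_pmf
    (fun k => common_crossover_degraded s ss k p1_ge0 p1_le p1s_le p2_le p2s_le)).
have avg_cst c : \sum_s \sum_ss w s ss * c = c.
  by rewrite -[RHS]mul1r -w_sum mulr_suml; apply: eq_bigr => s _; rewrite mulr_suml.
rewrite avg_cst in avg; apply: (le_trans avg); rewrite le_eqVlt; apply/orP; left; apply/eqP.
have -> : (N * B)%:R * (q1 * q1s * H2ln p1s + (1 - q1s) * H2ln p2s - q1 * H2ln p1
    - (1 - q1) * (1 - q1s) * H2ln p2) = \sum_s \sum_ss w s ss * gap s ss.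
  rewrite (sum_pstate_blocks _ _ _ _ (fun t t' => H2ln (if t' then p1s else p2s)
    - H2ln (if t then p1 else if t' then p1s else p2))) /=.
  ring.
rewrite err_probE leakageE -[in RHS](avg_cst (ln 2)) mulr_suml -!big_split /=.
apply: eq_bigr => s _.
rewrite mulr_suml -!big_split /=; apply: eq_bigr => ss _.
rewrite /w /de /mi; ring.
Qed.

Lemma H2lnE (p : R) : H2ln p = H2 p * ln 2.
Proof. by rewrite /H2ln /H2 /log2; field; rewrite gt_eqF // ln_gt0 // ltr1n. Qed.

Lemma log2_natr_ge0 (n : nat) : 0 <= log2 (n%:R : R).
Proof.
have ln2_ge0 : 0 <= ln 2 :> R by rewrite ln_ge0 // ler1n.
rewrite /log2 divr_ge0 //; case: n => [|n]; first by rewrite ln0.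
by rewrite ln_ge0 // ler1n.
Qed.

Lemma code_converse (q1 q1s p1 p1s p2 p2s : R) N B M (f : 'I_M -> word N B -> R)
    (g : word N B -> state B -> state B -> 'I_M) :
  0 <= q1 <= 1 -> 0 <= q1s <= 1 ->
  0 <= p1 -> p1 <= p1s -> p1s <= p2 -> p2 <= p2s -> p2s <= 2^-1 ->
  (0 < M)%N -> is_encoder f ->
  log2 M%:R <= 1 + err_prob q1 q1s p1 p2 f g * log2 M%:R + leakage q1 q1s p1s p2s f
    + (N * B)%:R * (q1 * q1s * H2 p1s + (1 - q1s) * H2 p2s - q1 * H2 p1
        - (1 - q1) * (1 - q1s) * H2 p2).
Proof.
move=> q1_01 q1s_01 p1_ge0 p1_le p1s_le p2_le p2s_le M_gt0 f_enc.
have ln2_gt0 : 0 < ln 2 :> R by rewrite ln_gt0 // ltr1n.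
rewrite -(ler_pM2r ln2_gt0) /log2 divfK ?gt_eqF //.
have := code_converse_ln g q1_01 q1s_01 p1_ge0 p1_le p1s_le p2_le p2s_le M_gt0 f_enc.
move=> /le_trans; apply.
by rewrite !H2lnE le_eqVlt; apply/orP; left; apply/eqP; field; rewrite gt_eqF.
Qed.

End BlockFading.

Section RateBounds.
Variable R : realType.

Lemma code_rate_le (r C t n L e l : R) :
  0 < n -> 0 <= L -> t <= 1 -> r - t <= L / n -> e <= t -> l / n <= t ->
  L <= 1 + e * L + l + n * C -> (1 - t) * (r - t) <= n^-1 + (t + C).
Proof.
move=> n_gt0 L_ge0 t_le1 rate e_le l_le converse.
rewrite ler_pdivlMr // in rate; rewrite ler_pdivrMr // in l_le.
rewrite addrA -(ler_pM2r n_gt0) !mulrDl mulVf ?gt_eqF //.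
have : (1 - t) * ((r - t) * n) <= (1 - t) * L by rewrite ler_wpM2l // subr_ge0.
have : e * L <= t * L by rewrite ler_wpM2r.
nra.
Qed.

Lemma le_of_le_invn (x y : R) :
  (forall n0 : nat, exists2 n : nat, (n0 <= n)%N & x <= n%:R^-1 + y) -> x <= y.
Proof.
move=> near_y; apply/ler_addgt0Pr => e e_gt0.
have [n n_ge x_le] := near_y (Num.Def.archi_bound e^-1).
have n_gt : e^-1 < n%:R.
  have einv_ge0 : 0 <= e^-1 by rewrite invr_ge0 ltW.
  by apply: lt_le_trans (archi_boundP einv_ge0) _; rewrite ler_nat.
have n_gt0 : 0 < n%:R :> R by apply: lt_trans n_gt; rewrite invr_gt0.
apply: (le_trans x_le); rewrite addrC lerD2l ltW // -[e]invrK ltf_pV2 ?posrE ?invr_gt0 //.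
Qed.

Lemma le_of_perturbed_le (r C : R) :
  (forall t, 0 < t -> t <= 2^-1 -> (1 - t) * (r - t) <= t + C) -> r <= C.
Proof.
move=> perturbed; apply/ler_addgt0Pr => e e_gt0.
have r2_gt0 : 0 < `|r| + 2 by rewrite ltr_wpDl.
pose t := Num.min 2^-1 (e / (`|r| + 2)).
have t_gt0 : 0 < t by rewrite lt_min invr_gt0 ltr0n divr_gt0.
have t_le : t <= 2^-1 by rewrite ge_min lexx.
have te_le : t * (`|r| + 2) <= e.
  by rewrite -ler_pdivlMr // ge_min lexx orbT.
have := perturbed t t_gt0 t_le.
have : r * t <= `|r| * t by apply: ler_wpM2r; [exact: ltW | exact: ler_norm].
nra.
Qed.

End RateBounds.

Theorem lemma3 (R : realType) (q1 q1s p1 p1s p2 p2s : R) :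
  0 <= q1 <= 1 -> 0 <= q1s <= 1 ->
  0 <= p1 -> p1 <= p1s -> p1s <= p2 -> p2 <= p2s -> p2s <= 1 / 2 ->
  (CsCSID q1 q1s p1 p2 p1s p2s <=
    (q1 * q1s * H2 p1s + (1 - q1s) * H2 p2s - q1 * H2 p1
      - (1 - q1) * (1 - q1s) * H2 p2)%:E)%E.
Proof.
move=> q1_01 q1s_01 p1_ge0 p1_le p1s_le p2_le p2s_le; rewrite div1r in p2s_le.
apply: ge_ereal_sup => _ [r r_achievable <-]; rewrite lee_fin.
apply: le_of_perturbed_le => t t_gt0 t_le.
apply: le_of_le_invn => n0.
have [N [B [M [f [g [[N_ge B_ge M_gt0 f_enc] [rate err leak]]]]]]] :=
  r_achievable t t_gt0 n0.+1 1%N.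
have NB_gt0 : (0 < N * B)%N by rewrite muln_gt0 (leq_trans _ N_ge).
exists (N * B)%N; first by rewrite (leq_trans (ltnW N_ge)) // leq_pmulr.
have t_le1 : t <= 1 by apply: le_trans t_le _; rewrite invf_le1 ?ler1n.
have NB_pos : 0 < (N * B)%:R :> R by rewrite ltr0n.
exact: code_rate_le NB_pos (@log2_natr_ge0 R M) t_le1 rate err leak
  (code_converse g q1_01 q1s_01 p1_ge0 p1_le p1s_le p2_le p2s_le M_gt0 f_enc).
Qed.
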